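(* Let $n=2$, $\Gamma=I_2$, $\Sigma=\begin{pmatrix}1&\rho\\ \rho&1\end{pmatrix}$ with $\rho\in(-1,1)$, and $M=\begin{pmatrix}M_{11}&M_{12}\\ M_{21}&M_{22}\end{pmatrix}$ arbitrary. Let $\kappa=\rho(M_{11}+M_{22})-(M_{12}+M_{21})$ and let $\Delta$ be the Nash equilibrium (matrix of deviations of negotiating positions from true beliefs). (1) If only agent $k$ is strategic ($S=\{k\}$), then $\Delta_{ij}=\kappa/3$ if $i\neq k$ and $j=k$, and $\Delta_{ij}=0$ otherwise. (2) If both agents are strategic ($S=\{1,2\}$), then $\Delta_{ij}=\kappa/4$ if $i\neq j$ and $\Delta_{ii}=0$.
   Context: Fix agents $[n]=\{1,\dots,n\}$. Let $\Sigma\in\mathbb{R}^{n\times n}$ be symmetric positive definite, $\Gamma=\mathrm{diag}(\gamma_1,\dots,\gamma_n)$ with all $\gamma_i>0$, and let $M\in\mathbb{R}^{n\times n}$ be the matrix of true beliefs with $i$-th column $\mu_i=Me_i$. For a matrix of reported negotiating positions $M'\in\mathbb{R}^{n\times n}$, the stable point for $M'$ is the unique pair $(W,P)$ of real $n\times n$ matrices with $W=W^T$, $P^T=-P$ and $M'-P=2\Sigma W\Gamma$. Agent $i$'s (true) utility is $g_i(W,P)=w_i^T(\mu_i-Pe_i)-\gamma_i\, w_i^T\Sigma w_i$, $w_i=We_i$. $S\subseteq[n]$ is the set of strategic agents; honest agents $i\notin S$ report $\mu_i'=\mu_i$, and each $k\in S$ reports $\mu_k'=\mu_k+\Delta e_k$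 with arbitrary $\Delta e_k\in\mathbb{R}^n$. A Nash equilibrium is a matrix $\Delta$ with $\Delta e_j=0$ for $j\notin S$ such that for each $k\in S$, given the other columns, the column $\Delta e_k$ maximizes $g_k$ at the stable point for $M+\Delta$. *)

From HB Require Import structures.
From mathcomp Require Import all_boot all_order all_algebra.
Set Implicit Arguments. Unset Strict Implicit. Unset Printing Implicit Defensive.
Import Order.TTheory GRing.Theory Num.Theory.
Local Open Scope ring_scope.

(* Agents are indexed by 'I_n (0-based: paper's agent i is ordinal i-1).
   Sigma, Gamma, M, M', W, P, Delta are n x n matrices over R. *)

Definition stable_point (R : realFieldType) (n : nat)
    (Sigma Gamma M' W P : 'M[R]_n) : Prop :=
  W^T = W /\ P^T = - P /\ M' - P = 2%:R *: (Sigma *m W *m Gamma).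

Definition utility (R : realFieldType) (n : nat)
    (Sigma Gamma M W P : 'M[R]_n) (i : 'I_n) : R :=
  ((col i W)^T *m (col i M - col i P)) 0 0
  - Gamma i i * ((col i W)^T *m Sigma *m col i W) 0 0.

Definition set_col (R : realFieldType) (n : nat) (D : 'M[R]_n) (k : 'I_n)
    (d : 'cV[R]_n) : 'M[R]_n :=
  \matrix_(i, j) if j == k then d i 0 else D i j.

(* Delta is a Nash equilibrium with strategic set S: honest columns are 0, and
   for every strategic k, the column Delta e_k maximizes g_k at the stable
   point of M + Delta among all alternative columns d (other columns fixed). *)
Definition nash_equilibrium (R : realFieldType) (n : nat)
    (Sigma Gamma M : 'M[R]_n) (S : {set 'I_n}) (Delta : 'M[R]_n) : Prop :=
  (forall j, j \notin S -> col j Delta = 0) /\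
  forall k, k \in S -> forall (d : 'cV[R]_n) (W P W' P' : 'M[R]_n),
    stable_point Sigma Gamma (M + Delta) W P ->
    stable_point Sigma Gamma (M + set_col Delta k d) W' P' ->
    utility Sigma Gamma M W' P' k <= utility Sigma Gamma M W P k.

Definition Sigma2 (R : realFieldType) (rho : R) : 'M[R]_2 :=
  \matrix_(i, j) if i == j then 1 else rho.

(* With Gamma = I and two agents the stable point is explicit; in particular
   W l k = - kappa(M') / (4 (1 - rho^2)).  Once the other agent's column is
   fixed, agent k's report ranges freely over the pair (W k k, W l k), and
   P k l moves by -2 (1 - rho^2) per unit of W l k.  Agent k's utility is thus
   a quadratic in that pair whose quadratic part is negative definite because
   rho^2 < 1, so a best response is exactly a vanishing gradient: D k k = 0 and
   2 D l k = kappa(M + D).  Solving these linear equations for one or for both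
   strategic agents gives kappa/3 and kappa/4. *)

From HB Require Import structures.
From mathcomp Require Import all_boot all_order all_algebra ring lra.
Import Order.TTheory GRing.Theory Num.Theory.
Set Implicit Arguments. Unset Strict Implicit. Unset Printing Implicit Defensive.
Local Open Scope ring_scope.

Lemma ord2P (i : 'I_2) : i = 0 \/ i = 1.
Proof. by case: i => [[|[|m]] Hm] //; [left | right]; apply: val_inj. Qed.

Lemma exists_ord2_neq (k : 'I_2) : exists l, k != l.
Proof. by case: (ord2P k) => ->; [exists 1 | exists 0]. Qed.

Section DistinctIndices.
Variables k l : 'I_2.
Hypothesis neq_kl : k != l.

Lemma ord2_pairP i : i = k \/ i = l.
Proof.
by move: neq_kl; case: (ord2P k) => ->; case: (ord2P l) => -> //= _;
  case: (ord2P i) => ->; auto.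
Qed.

Lemma big_ord2_pair (V : zmodType) (F : 'I_2 -> V) : \sum_i F i = F k + F l.
Proof.
rewrite big_ord_recl big_ord1.
have -> : lift ord0 ord0 = 1 :> 'I_2 by apply: val_inj.
by move: neq_kl; case: (ord2P k) => ->; case: (ord2P l) => -> //= _;
  rewrite addrC.
Qed.

Lemma neq_ord2_eq i : i != k -> i = l.
Proof. by case: (ord2_pairP i) => -> //; rewrite eqxx. Qed.

Lemma matrix2_pairP (T : Type) (A B : 'M[T]_2) :
  A = B <-> [/\ A k k = B k k, A k l = B k l, A l k = B l k & A l l = B l l].
Proof.
split=> [-> // | [Ekk Ekl Elk Ell]]; apply/matrixP=> i j.
by case: (ord2_pairP i) => ->; case: (ord2_pairP j) => ->.
Qed.

Lemma col_eq0_pairP (V : zmodType) (A : 'M[V]_2) j :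
  col j A = 0 <-> A k j = 0 /\ A l j = 0.
Proof.
split=> [colA0 | [Akj Alj]].
  by split; [move/matrixP/(_ k 0): colA0 | move/matrixP/(_ l 0): colA0]; rewrite !mxE.
by apply/matrixP=> i i0; rewrite !mxE; case: (ord2_pairP i) => ->.
Qed.

End DistinctIndices.

Section ConcaveQuadratic.
Variable R : realFieldType.

Lemma linear_le_square (a b : R) : 0 < b -> (forall h, a * h <= b * h ^+ 2) -> a = 0.
Proof.
move=> b_gt0 ab_le; pose t := a / (2 * b).
have a_eq : a = 2 * b * t by rewrite /t; field; rewrite lt0r_neq0.
have := ab_le t; rewrite a_eq expr2 => le_t; nra.
Qed.

Definition quad_form (r g x y : R) := x ^+ 2 + 2 * r * x * y + g * y ^+ 2.

Lemma quad_form_ge0 (r g x y : R) : r ^+ 2 < g -> 0 <= quad_form r g x y.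
Proof.
rewrite /quad_form !expr2 => rg.
have : 0 <= (x + r * y) ^+ 2 by apply: sqr_ge0.
have : 0 <= (g - r * r) * y ^+ 2 by apply: mulr_ge0; [lra | apply: sqr_ge0].
rewrite !expr2; nra.
Qed.

Lemma quad_form_maxP (r g m1 m2 x0 y0 : R) : r ^+ 2 < g ->
  (forall x y, m1 * x + m2 * y - quad_form r g x y
               <= m1 * x0 + m2 * y0 - quad_form r g x0 y0)
  <-> m1 = 2 * (x0 + r * y0) /\ m2 = 2 * (r * x0 + g * y0).
Proof.
move=> rg; set g1 := m1 - 2 * (x0 + r * y0); set g2 := m2 - 2 * (r * x0 + g * y0).
have shift h1 h2 : m1 * (x0 + h1) + m2 * (y0 + h2) - quad_form r g (x0 + h1) (y0 + h2)
    - (m1 * x0 + m2 * y0 - quad_form r g x0 y0) = g1 * h1 + g2 * h2 - quad_form r g h1 h2.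
  by rewrite /g1 /g2 /quad_form; ring.
split=> [max0 | [m1E m2E] x y].
- have g1_0 : g1 = 0.
    apply: (@linear_le_square _ 1 ltr01) => h.
    have := max0 (x0 + h) (y0 + 0); rewrite -subr_le0 shift /quad_form; lra.
  have : g2 = 0.
    apply: (@linear_le_square _ (g - r ^+ 2)); first lra.
    move=> h; have := max0 (x0 + - (r * h)) (y0 + h).
    rewrite -subr_le0 shift /quad_form g1_0 !expr2; lra.
  by rewrite /g1 /g2 in g1_0 * => g2_0; split; lra.
- rewrite -subr_le0; have := shift (x - x0) (y - y0); rewrite !subrKC => ->.
  have -> : g1 = 0 by rewrite /g1; lra.
  have -> : g2 = 0 by rewrite /g2; lra.
  have := @quad_form_ge0 r g (x - x0) (y - y0) rg; lra.
Qed.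
End ConcaveQuadratic.

Section TwoAgents.
Variable R : realFieldType.
Variable rho : R.

Definition kappa2 (A : 'M[R]_2) := rho * (A 0 0 + A 1 1) - (A 0 1 + A 1 0).

Section Agent.
Variables k l : 'I_2.
Hypothesis neq_kl : k != l.

Let neq_lk : l != k. Proof. by rewrite eq_sym. Qed.

Lemma kappa2E A : kappa2 A = rho * (A k k + A l l) - (A k l + A l k).
Proof.
by rewrite /kappa2; move: neq_kl; case: (ord2P k) => ->; case: (ord2P l) => -> //= _;
  ring.
Qed.

Lemma stable_pointE M' W P :
  stable_point (Sigma2 rho) 1%:M M' W P <->
  [/\ W l k = W k l, P k k = 0, P l l = 0, P l k = - P k l &
   [/\ M' k k = 2 * (W k k + rho * W l k),
       M' l k - P l k = 2 * (rho * W k k + W l k),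
       M' k l - P k l = 2 * (W k l + rho * W l l) &
       M' l l = 2 * (rho * W k l + W l l)]].
Proof.
rewrite /stable_point mulmx1 !(matrix2_pairP neq_kl) !mxE !(big_ord2_pair neq_kl).
rewrite !mxE !eqxx (negbTE neq_kl) (negbTE neq_lk) !mul1r.
split=> [[[_ Wlk _ _] [[Pkk Plk _ Pll] [Ekk Ekl Elk Ell]]] | [Wlk Pkk Pll Plk [Ekk Elk Ekl Ell]]].
- have Pkk0 : P k k = 0 by lra.
  have Pll0 : P l l = 0 by lra.
  by split=> //; split; lra.
- by split; [| split]; split; lra.
Qed.

Lemma stable_point_kappa2 M' W P :
  stable_point (Sigma2 rho) 1%:M M' W P -> kappa2 M' = -4 * (1 - rho ^+ 2) * W l k.
Proof.
move=> /stable_pointE[Wlk _ _ Plk [Ekk Elk Ekl Ell]]; rewrite kappa2E.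
rewrite Ekk Ell -Wlk; lra.
Qed.

Lemma utility_stable_point M M' W P :
  stable_point (Sigma2 rho) 1%:M M' W P ->
  utility (Sigma2 rho) 1%:M M W P k
  = M k k * W k k + (M l k + (M' k l - rho * M' l l)) * W l k
    - quad_form rho (3 - 2 * rho ^+ 2) (W k k) (W l k).
Proof.
move=> /stable_pointE[Wlk Pkk _ Plk [_ _ Ekl Ell]].
have Pkl : P k l = M' k l - rho * M' l l - 2 * (1 - rho ^+ 2) * W l k.
  by rewrite Ell -Wlk; lra.
rewrite /utility /quad_form !(mxE, big_ord2_pair neq_kl) !eqxx (negbTE neq_kl) (negbTE neq_lk).
rewrite Pkk Plk Pkl /=; ring.
Qed.

Definition symmx2 (x y z : R) : 'M[R]_2 :=
  \matrix_(i, j) if i == j then (if i == k then x else z) else y.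

Definition skewmx2 (p : R) : 'M[R]_2 :=
  \matrix_(i, j) if i == j then 0 else if i == k then p else - p.

Lemma stable_point_symmx2 (M' : 'M[R]_2) x y z p :
  M' k k = 2 * (x + rho * y) -> M' l k = 2 * (rho * x + y) - p ->
  M' k l = p + 2 * (y + rho * z) -> M' l l = 2 * (rho * y + z) ->
  stable_point (Sigma2 rho) 1%:M M' (symmx2 x y z) (skewmx2 p).
Proof.
move=> Ekk Elk Ekl Ell; apply/stable_pointE.
by rewrite /symmx2 /skewmx2 !mxE !eqxx (negbTE neq_kl) (negbTE neq_lk) opprK;
  split=> //; split; lra.
Qed.

(* The column l of the report is untouched, so it still pins down W l l and
   P k l; the deviating column is then read off from the equations of column k. *)
Lemma stable_point_deviation M D x y : exists d W P,
  [/\ stable_point (Sigma2 rho) 1%:M (M + set_col D k d) W P, W k k = x & W l k = y].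
Proof.
pose z := (M + D) l l / 2 - rho * y.
pose p := (M + D) k l - 2 * (y + rho * z).
pose d : 'cV[R]_2 := \col_i
  (if i == k then 2 * (x + rho * y) - M k k else 2 * (rho * x + y) - p - M l k).
exists d, (symmx2 x y z), (skewmx2 p).
rewrite /symmx2 !mxE eqxx (negbTE neq_lk); split=> //.
by apply: stable_point_symmx2;
  rewrite /set_col !mxE ?eqxx ?(negbTE neq_lk) /p /z ?mxE; field.
Qed.

End Agent.

Lemma stable_point_exists M' : rho ^+ 2 < 1 ->
  exists W P, stable_point (Sigma2 rho) 1%:M M' W P.
Proof.
move=> rho2_lt1; have rho2_neq1 : 1 - rho ^+ 2 != 0 by rewrite subr_eq0 gt_eqF.
pose y := - kappa2 M' / (4 * (1 - rho ^+ 2)).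
pose z := M' 1 1 / 2 - rho * y.
pose p := M' 0 1 - 2 * (y + rho * z).
exists (symmx2 0 (M' 0 0 / 2 - rho * y) y z), (skewmx2 0 p).
by apply: (stable_point_symmx2 (isT : 0 != 1 :> 'I_2));
  rewrite /p /z /y /kappa2; field.
Qed.

Section BestResponse.
Variables k l : 'I_2.
Hypothesis neq_kl : k != l.

Lemma best_responseE M D : rho ^+ 2 < 1 ->
  (forall d W P W' P',
     stable_point (Sigma2 rho) 1%:M (M + D) W P ->
     stable_point (Sigma2 rho) 1%:M (M + set_col D k d) W' P' ->
     utility (Sigma2 rho) 1%:M M W' P' k <= utility (Sigma2 rho) 1%:M M W P k)
  <-> D k k = 0 /\ 2 * D l k = kappa2 (M + D).
Proof.
move=> rho2_lt1; have gamma_gt : rho ^+ 2 < 3 - 2 * rho ^+ 2 by lra.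
have neq_lk : l != k by rewrite eq_sym.
pose c := (M + D) k l - rho * (M + D) l l.
have devE d : (M + set_col D k d) k l - rho * (M + set_col D k d) l l = c.
  by rewrite /c /set_col !mxE (negbTE neq_lk).
have gradE W P : stable_point (Sigma2 rho) 1%:M (M + D) W P ->
    M k k = 2 * (W k k + rho * W l k) /\
    M l k + c = 2 * (rho * W k k + (3 - 2 * rho ^+ 2) * W l k)
    <-> D k k = 0 /\ 2 * D l k = kappa2 (M + D).
  move=> spWP; rewrite (stable_point_kappa2 neq_kl spWP).
  move/(stable_pointE neq_kl): spWP => [Wlk _ _ Plk [Ekk Elk Ekl Ell]].
  have cE : c = P k l + 2 * (1 - rho ^+ 2) * W l k.
    by rewrite /c Ell -Wlk; lra.
  rewrite cE; move: Ekk Elk; rewrite !mxE Plk => Ekk Elk.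
  by split=> -[]; split; lra.
have [W [P spWP]] := stable_point_exists (M + D) rho2_lt1.
split=> [br | cond d W0 P0 W' P' sp0 sp'].
- apply/(gradE W P spWP)/(quad_form_maxP _ _ _ _ gamma_gt) => x y.
  have [d [W' [P' [sp' <- <-]]]] := stable_point_deviation neq_kl M D x y.
  have := br d W P W' P' spWP sp'.
  by rewrite (utility_stable_point neq_kl M sp') (utility_stable_point neq_kl M spWP) devE.
- rewrite (utility_stable_point neq_kl M sp') (utility_stable_point neq_kl M sp0) devE.
  by apply: (quad_form_maxP _ _ _ _ gamma_gt).2; apply/(gradE W0 P0 sp0).
Qed.

End BestResponse.

Lemma nash_equilibrium_Sigma2E M S D : rho ^+ 2 < 1 ->
  nash_equilibrium (Sigma2 rho) 1%:M M S D <->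
  (forall j, j \notin S -> col j D = 0) /\
  (forall k l, k \in S -> k != l -> D k k = 0 /\ 2 * D l k = kappa2 (M + D)).
Proof.
move=> rho2_lt1; split=> -[honest strategic]; split=> // k.
  by move=> l kS neq_kl; apply/(best_responseE neq_kl _ _ rho2_lt1)/strategic.
move=> kS; have [l neq_kl] := exists_ord2_neq k.
by apply/(best_responseE neq_kl _ _ rho2_lt1)/strategic.
Qed.

Lemma nash_equilibrium_set1E M k l D : rho ^+ 2 < 1 -> k != l ->
  nash_equilibrium (Sigma2 rho) 1%:M M [set k] D <->
  [/\ D k l = 0, D l l = 0, D k k = 0 & 2 * D l k = kappa2 (M + D)].
Proof.
move=> rho2_lt1 neq_kl; rewrite nash_equilibrium_Sigma2E //.
split=> [[honest strategic] | [Dkl Dll Dkk DlkE]].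
  have /(col_eq0_pairP neq_kl)[Dkl Dll] : col l D = 0.
    by apply: honest; rewrite in_set1 eq_sym.
  by have [Dkk DlkE] := strategic k l (set11 k) neq_kl.
split=> [j | k' l'].
  by rewrite in_set1 => /(neq_ord2_eq neq_kl) ->; apply/(col_eq0_pairP neq_kl).
rewrite in_set1 => /eqP -> neq_kl'.
by have -> : l' = l by apply: (neq_ord2_eq neq_kl); rewrite eq_sym.
Qed.

Lemma nash_equilibrium_setTE M D : rho ^+ 2 < 1 ->
  nash_equilibrium (Sigma2 rho) 1%:M M [set: 'I_2] D <->
  [/\ D 0 0 = 0, D 1 1 = 0, 2 * D 1 0 = kappa2 (M + D) & 2 * D 0 1 = kappa2 (M + D)].
Proof.
move=> rho2_lt1; rewrite nash_equilibrium_Sigma2E //.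
split=> [[_ strategic] | [D00 D11 D10E D01E]].
  have [D00 D10E] := strategic 0 1 (in_setT _) isT.
  by have [D11 D01E] := strategic 1 0 (in_setT _) isT.
split=> [j | k l _]; first by rewrite in_setT.
by case: (ord2P k) => ->; case: (ord2P l) => ->.
Qed.

End TwoAgents.

Theorem mainTheorem10 (R : realFieldType) (rho : R) (M : 'M[R]_2)
  (hrho1 : -1 < rho) (hrho2 : rho < 1) :
  let kappa := rho * (M 0 0 + M 1 1) - (M 0 1 + M 1 0) in
  (forall (k : 'I_2) (Delta : 'M[R]_2),
     nash_equilibrium (Sigma2 rho) 1%:M M [set k] Delta <->
     Delta = \matrix_(i, j) (if (i != k) && (j == k) then kappa / 3%:R else 0))
  /\
  (forall Delta : 'M[R]_2,
     nash_equilibrium (Sigma2 rho) 1%:M M [set: 'I_2] Delta <->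
     Delta = \matrix_(i, j) (if i != j then kappa / 4%:R else 0)).
Proof.
move=> kappa; have rho2_lt1 : rho ^+ 2 < 1 by rewrite expr2; nra.
have kappa2D D : kappa2 rho (M + D) = kappa + kappa2 rho D.
  by rewrite /kappa /kappa2 !mxE; ring.
split=> [k D | D].
- have [l neq_kl] := exists_ord2_neq k.
  have neq_lk : l != k by rewrite eq_sym.
  rewrite (nash_equilibrium_set1E _ _ rho2_lt1 neq_kl) (matrix2_pairP neq_kl) !mxE eqxx.
  rewrite (negbTE neq_lk) /= kappa2D (kappa2E _ neq_kl).
  split=> [[Dkl Dll Dkk DlkE] | [Dkk Dkl DlkE Dll]];
    rewrite ?Dkl ?Dll ?Dkk in DlkE *; split; lra.
- rewrite nash_equilibrium_setTE // (matrix2_pairP (isT : 0 != 1 :> 'I_2)) !mxE /=.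
  rewrite kappa2D /kappa2.
  split=> [[D00 D11 D10E D01E] | [D00 D01E D10E D11]];
    rewrite ?D00 ?D11 in D01E D10E *; split; lra.
Qed.
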